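(* Let $\mathcal V$ be a subcanonical descent category, $k$ a natural number, and $f:X\to Y$ a hypercover of $k$-groupoids. Then $X_n\to\mathrm{Map}(\partial\Delta^n\hookrightarrow\Delta^n,f)$ is an isomorphism for all $n\ge k$.
   Context: A descent category is a small category $\mathcal V$ with a subcategory of morphisms called covers such that: $\mathcal V$ has finite limits; pullbacks of covers are covers; if $f$ and $g\circ f$ are covers then $g$ is a cover. It is subcanonical if every cover is an effective epimorphism (i.e. $f:X\to Y$ is the coequalizer of $X\times_YX\rightrightarrows X$). A simplicial space is a simplicial object in $\mathcal V$; $\mathrm{Map}(T,X)$ is the finite limit representing simplicial maps $T\to X$; $\mathrm{Map}(S\hookrightarrow T,f)=\mathrm{Map}(S,X)\times_{\mathrm{Map}(S,Y)}\mathrm{Map}(T,Y)$. $\Lambda^n_i=\bigcup_{j\ne i}\partial_j\Delta^n$. A $k$-groupoid is a simplicial space with $X_n\to\mathrm{Map}(\Lambda^n_i,X)$ a cover for $n>0$, $0\le i\le n$, and an isomorphism for $n>k$. A hypercover is a morphism $f$ with $X_n\to\mathrm{Map}(\partial\Delta^n\hookrightarrow\Delta^n,f)$ a cover for all $n\ge0$. *)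

From mathcomp Require Import all_boot.

Set Implicit Arguments.
Unset Strict Implicit.
Unset Printing Implicit Defensive.

Record Cat := {
  Ob :> Type;
  Hom : Ob -> Ob -> Type;
  comp : forall a b c : Ob, Hom b c -> Hom a b -> Hom a c;
  idm : forall a : Ob, Hom a a;
  comp_assoc : forall a b c d (h : Hom c d) (g : Hom b c) (f : Hom a b),
      comp h (comp g f) = comp (comp h g) f;
  comp_idl : forall a b (f : Hom a b), comp (idm b) f = f;
  comp_idr : forall a b (f : Hom a b), comp f (idm a) = f }.

Arguments Hom {_} _ _.
Arguments comp {_ _ _ _} _ _.
Arguments idm {_} _.

Definition is_iso (C : Cat) (a b : C) (f : Hom a b) : Prop :=
  exists g : Hom b a, comp g f = idm a /\ comp f g = idm b.

Record FinCat := {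
  Jo : finType;
  Jh : Jo -> Jo -> finType;
  jcomp : forall i j k, Jh j k -> Jh i j -> Jh i k;
  jid : forall i, Jh i i;
  jassoc : forall i j k l (w : Jh k l) (v : Jh j k) (u : Jh i j),
      jcomp w (jcomp v u) = jcomp (jcomp w v) u;
  jidl : forall i j (u : Jh i j), jcomp (jid j) u = u;
  jidr : forall i j (u : Jh i j), jcomp u (jid i) = u }.

Record Diagram (C : Cat) (J : FinCat) := {
  dob : Jo J -> C;
  dhom : forall i j, @Jh J i j -> Hom (dob i) (dob j);
  dhom_id : forall i, dhom (jid i) = idm (dob i);
  dhom_comp : forall i j k (v : @Jh J j k) (u : @Jh J i j),
      dhom (jcomp v u) = comp (dhom v) (dhom u) }.

Arguments dob {C J} _ _.
Arguments dhom {C J} _ {i j} _.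

Definition is_limit (C : Cat) (J : FinCat) (D : Diagram C J) (L : C)
    (p : forall i, Hom L (dob D i)) : Prop :=
  (forall i j (u : @Jh J i j), comp (dhom D u) (p i) = p j) /\
  (forall (Z : C) (q : forall i, Hom Z (dob D i)),
      (forall i j (u : @Jh J i j), comp (dhom D u) (q i) = q j) ->
      exists h : Hom Z L, (forall i, comp (p i) h = q i) /\
        (forall h' : Hom Z L, (forall i, comp (p i) h' = q i) -> h' = h)).

Arguments is_limit {C J} D L p.

Definition has_finite_limits (C : Cat) : Prop :=
  forall (J : FinCat) (D : Diagram C J), exists (L : C) p, is_limit D L p.

Definition is_pullback (C : Cat) (A B C0 : C) (f : Hom A C0) (g : Hom B C0)
    (P : C) (p1 : Hom P A) (p2 : Hom P B) : Prop :=
  comp f p1 = comp g p2 /\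
  (forall (Z : C) (q1 : Hom Z A) (q2 : Hom Z B), comp f q1 = comp g q2 ->
     exists h : Hom Z P, (comp p1 h = q1 /\ comp p2 h = q2) /\
       (forall h' : Hom Z P, comp p1 h' = q1 -> comp p2 h' = q2 -> h' = h)).

Record DescentCat := {
  dcat :> Cat;
  cover : forall a b : dcat, Hom a b -> Prop;
  dc_finite_limits : has_finite_limits dcat;
  cover_id : forall a : dcat, cover (idm a);
  cover_comp : forall (a b c : dcat) (g : Hom b c) (f : Hom a b),
      cover f -> cover g -> cover (comp g f);
  cover_pullback : forall (A B C0 P : dcat) (f : Hom A C0) (g : Hom B C0)
      (p1 : Hom P A) (p2 : Hom P B),
      cover f -> is_pullback f g p1 p2 -> cover p2;
  cover_2of3 : forall (a b c : dcat) (f : Hom a b) (g : Hom b c),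
      cover f -> cover (comp g f) -> cover g }.

Arguments cover {d a b} _.

Definition effective_epi (C : Cat) (X Y : C) (f : Hom X Y) : Prop :=
  forall (P : C) (p1 p2 : Hom P X), is_pullback f f p1 p2 ->
  forall (Z : C) (h : Hom X Z), comp h p1 = comp h p2 ->
    exists u : Hom Y Z, comp u f = h /\
      (forall u' : Hom Y Z, comp u' f = h -> u' = u).

Definition subcanonical (V : DescentCat) : Prop :=
  forall (X Y : V) (f : Hom X Y), cover f -> effective_epi f.

Definition monob m n (f : {ffun 'I_m.+1 -> 'I_n.+1}) : bool :=
  [forall i : 'I_m.+1, forall j : 'I_m.+1, (i <= j) ==> (f i <= f j)].

Definition dmap m n := {f : {ffun 'I_m.+1 -> 'I_n.+1} | monob f}.

Definition dfun m n (s : dmap m n) : 'I_m.+1 -> 'I_n.+1 := fun i => sval s i.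

Lemma monob_comp l m n (g : dmap m n) (f : dmap l m) :
  monob [ffun i => dfun g (dfun f i)].
Proof.
case: g => g Hg; case: f => f Hf; rewrite /dfun /=.
apply/forallP => i; apply/forallP => j; rewrite !ffunE; apply/implyP => Hij.
have Hfij : f i <= f j by move/forallP: Hf => /(_ i)/forallP/(_ j)/implyP; apply.
by move/forallP: Hg => /(_ (f i))/forallP/(_ (f j))/implyP; apply.
Qed.

Lemma monob_id n : monob [ffun i : 'I_n.+1 => i].
Proof. by apply/forallP => i; apply/forallP => j; rewrite !ffunE; apply/implyP. Qed.

Definition dcomp l m n (g : dmap m n) (f : dmap l m) : dmap l n :=
  exist (@monob l n) _ (monob_comp g f).

Definition did n : dmap n n := exist (@monob n n) _ (monob_id n).

Record SObj (C : Cat) := {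
  sob :> nat -> C;
  sact : forall m n, dmap m n -> Hom (sob n) (sob m);
  sact_id : forall n, sact (did n) = idm (sob n);
  sact_comp : forall l m n (g : dmap m n) (f : dmap l m),
      sact (dcomp g f) = comp (sact f) (sact g) }.

Record SMor (C : Cat) (X Y : SObj C) := {
  smor :> forall n, Hom (X n) (Y n);
  smor_nat : forall m n (t : dmap m n),
      comp (smor m) (sact X t) = comp (sact Y t) (smor n) }.

(* Simplicial subsets of Delta^n, described by their simplices         *)
(* (an m-simplex of Delta^n is a monotone map [m] -> [n])               *)

Definition boundary n m (s : dmap m n) : bool :=
  [exists j : 'I_n.+1, [forall i : 'I_m.+1, dfun s i != j]].

Definition horn n (k : 'I_n.+1) m (s : dmap m n) : bool :=
  [exists j : 'I_n.+1, (j != k) && [forall i : 'I_m.+1, dfun s i != j]].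

Definition fullsimplex n m (s : dmap m n) : bool := true.

Section MapDefs.
Variable C : Cat.

(* the data of a map T -> Hom(Z, X_.) : one Z-point of X_m per m-simplex of T *)
Definition sfamily (X : SObj C) n (T : forall m, dmap m n -> bool) (Z : C) :=
  forall m (s : dmap m n), T m s -> Hom Z (X m).

Definition scompatible (X : SObj C) n (T : forall m, dmap m n -> bool) (Z : C)
    (a : sfamily X T Z) : Prop :=
  forall l m (t : dmap l m) (s : dmap m n) (Hs : T m s) (Hst : T l (dcomp s t)),
    a l (dcomp s t) Hst = comp (sact X t) (a m s Hs).

(* (M, phi) represents Z |-> sSet(T, Hom(Z, X_.)), i.e. M = Map(T, X) *)
Definition is_Map (X : SObj C) n (T : forall m, dmap m n -> bool) (M : C)
    (phi : forall Z : C, Hom Z M -> sfamily X T Z) : Prop :=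
  [/\ forall Z (c : Hom Z M), scompatible (phi Z c),
      forall Z Z' (g : Hom Z' Z) (c : Hom Z M) m s H,
        phi Z' (comp c g) m s H = comp (phi Z c m s H) g,
      forall Z (a : sfamily X T Z), scompatible a ->
        exists c : Hom Z M, forall m s H, phi Z c m s H = a m s H
    & forall Z (c c' : Hom Z M),
        (forall m s H, phi Z c m s H = phi Z c' m s H) -> c = c'].

(* the canonical map X_n -> Map(T, X) (restriction along T -> Delta^n) *)
Definition canon_Map (X : SObj C) n (T : forall m, dmap m n -> bool) (M : C)
    (phi : forall Z : C, Hom Z M -> sfamily X T Z) (c : Hom (X n) M) : Prop :=
  forall m s H, phi (X n) c m s H = sact X s.

(* (M, phi, psi) represents
   Z |-> sSet(T, Hom(Z,X_.)) x_{sSet(T, Hom(Z,Y_.))} Hom(Z, Y_n),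
   i.e. M = Map(T -> Delta^n, f) = Map(T,X) x_{Map(T,Y)} Y_n *)
Definition is_MapRel (X Y : SObj C) (f : SMor X Y) n
    (T : forall m, dmap m n -> bool) (M : C)
    (phi : forall Z : C, Hom Z M -> sfamily X T Z)
    (psi : forall Z : C, Hom Z M -> Hom Z (Y n)) : Prop :=
  [/\ forall Z (c : Hom Z M), scompatible (phi Z c),
      forall Z (c : Hom Z M) m s H,
        comp (f m) (phi Z c m s H) = comp (sact Y s) (psi Z c),
      forall Z Z' (g : Hom Z' Z) (c : Hom Z M),
        (forall m s H, phi Z' (comp c g) m s H = comp (phi Z c m s H) g) /\
        psi Z' (comp c g) = comp (psi Z c) g,
      forall Z (a : sfamily X T Z) (y : Hom Z (Y n)), scompatible a ->
        (forall m s H, comp (f m) (a m s H) = comp (sact Y s) y) ->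
        exists c : Hom Z M, (forall m s H, phi Z c m s H = a m s H) /\ psi Z c = y
    & forall Z (c c' : Hom Z M),
        (forall m s H, phi Z c m s H = phi Z c' m s H) -> psi Z c = psi Z c' ->
        c = c'].

Definition canon_MapRel (X Y : SObj C) (f : SMor X Y) n
    (T : forall m, dmap m n -> bool) (M : C)
    (phi : forall Z : C, Hom Z M -> sfamily X T Z)
    (psi : forall Z : C, Hom Z M -> Hom Z (Y n)) (c : Hom (X n) M) : Prop :=
  (forall m s H, phi (X n) c m s H = sact X s) /\ psi (X n) c = f n.

End MapDefs.

Arguments sfamily {C} X {n} T Z.
Arguments scompatible {C X n T Z} a.
Arguments is_Map {C} X {n} T M phi.
Arguments canon_Map {C X n T M} phi c.
Arguments is_MapRel {C X Y} f {n} T M phi psi.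
Arguments canon_MapRel {C X Y} f {n T M} phi psi c.

Definition is_kgroupoid (V : DescentCat) (k : nat) (X : SObj V) : Prop :=
  forall n (i : 'I_n.+1), 0 < n ->
  forall (M : V) (phi : forall Z : V, Hom Z M -> sfamily X (horn i) Z),
    is_Map X (horn i) M phi ->
    forall c : Hom (X n) M, canon_Map phi c ->
      cover c /\ (k < n -> is_iso c).

Definition is_hypercover (V : DescentCat) (X Y : SObj V) (f : SMor X Y) : Prop :=
  forall n (M : V) (phi : forall Z : V, Hom Z M -> sfamily X (boundary (n:=n)) Z)
    (psi : forall Z : V, Hom Z M -> Hom Z (Y n)),
    is_MapRel f (boundary (n:=n)) M phi psi ->
    forall c : Hom (X n) M, canon_MapRel f phi psi c -> cover c.

(* The comparison map [c : X_n -> Map(boundary Delta^n -> Delta^n, f)] is a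
   cover, and in a subcanonical descent category a monic cover is an
   isomorphism; so it suffices that points [g, h] of [X_n] that agree on the
   boundary and satisfy [f g = f h] are equal.  For [n > k] this holds because
   [X_n] is the horn space [Map(Lambda^n_0, X)].  For [n = k], glue the
   degenerate simplex [s_n g] with its face [d_n] replaced by [h] into a point
   of [Map(boundary Delta^(n+1) -> Delta^(n+1), f)].  The face [d_n] of such a
   point is determined by its restriction to the horn [Lambda^(n+1)_n], where
   it agrees with [s_n g]; hence [h = d_n s_n g = g].  All the [Map] objects
   involved exist, as finite limits. *)

From mathcomp Require Import all_boot zify.

Set Implicit Arguments.
Unset Strict Implicit.
Unset Printing Implicit Defensive.

Lemma monob_ffun m n (F : 'I_m.+1 -> 'I_n.+1) :
  {homo F : i j / i <= j} -> monob [ffun i => F i].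
Proof.
by move=> F_mono; apply/forallP => i; apply/forallP => j; rewrite !ffunE; apply/implyP/F_mono.
Qed.

Lemma dcompE l m n (g : dmap m n) (f : dmap l m) i :
  dfun (dcomp g f) i = dfun g (dfun f i).
Proof. by rewrite /dfun /= ffunE. Qed.

Lemma didE n i : dfun (did n) i = i.
Proof. by rewrite /dfun /= ffunE. Qed.

Lemma dmap_ext m n (s t : dmap m n) : dfun s =1 dfun t -> s = t.
Proof. by move=> st; apply/val_inj/ffunP. Qed.

Lemma dmap_mono m n (s : dmap m n) : {homo dfun s : i j / i <= j}.
Proof.
by case: s => s s_mono i j; rewrite /dfun /=; move/forallP/(_ i)/forallP/(_ j)/implyP: s_mono.
Qed.

Lemma dcompA k l m n (h : dmap m n) (g : dmap l m) (f : dmap k l) :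
  dcomp h (dcomp g f) = dcomp (dcomp h g) f.
Proof. by apply: dmap_ext => i; rewrite !dcompE. Qed.

Lemma dcomp_did m n (f : dmap m n) : dcomp f (did m) = f.
Proof. by apply: dmap_ext => i; rewrite dcompE didE. Qed.

Lemma did_dcomp m n (f : dmap m n) : dcomp (did n) f = f.
Proof. by apply: dmap_ext => i; rewrite dcompE didE. Qed.

Lemma lift_mono l (j : 'I_l.+2) : {homo lift j : i k / i <= k}.
Proof. by move=> i k; rewrite /= leq_bump2. Qed.

Definition delta l (j : 'I_l.+2) : dmap l l.+1 :=
  exist (@monob _ _) _ (monob_ffun (lift_mono j)).

(* [sigma b] identifies the vertices [b.-1] and [b]. *)
Definition sigma_fun l (b i : 'I_l.+2) : 'I_l.+1 := inord (if i < b then i : nat else i.-1).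

Lemma sigma_funE l (b i : 'I_l.+2) :
  sigma_fun b i = (if i < b then i : nat else i.-1) :> nat.
Proof. by rewrite inordK //; case: ifP; have := ltn_ord b; have := ltn_ord i; lia. Qed.

Lemma sigma_fun_mono l (b : 'I_l.+2) : {homo sigma_fun b : i k / i <= k}.
Proof. by move=> i k; rewrite !sigma_funE; do ?case: ifP => ?; lia. Qed.

Definition sigma l (b : 'I_l.+2) : dmap l.+1 l :=
  exist (@monob _ _) _ (monob_ffun (sigma_fun_mono b)).

Lemma deltaE l (j : 'I_l.+2) i : dfun (delta j) i = lift j i.
Proof. by rewrite /dfun /= ffunE. Qed.

Lemma sigmaE l (b : 'I_l.+2) i : dfun (sigma b) i = (if i < b then i : nat else i.-1) :> nat.
Proof. by rewrite /dfun /= ffunE sigma_funE. Qed.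

Lemma delta_neq l (j : 'I_l.+2) i : dfun (delta j) i != j.
Proof. by rewrite deltaE eq_sym neq_lift. Qed.

Lemma lift_sigma l (j i : 'I_l.+2) : i != j -> lift j (dfun (sigma j) i) = i.
Proof.
move=> neq_ij; apply: ord_inj; rewrite /= /bump sigmaE; move: neq_ij; rewrite -val_eqE /=.
by do ?case: ifP => ?; lia.
Qed.

Lemma delta_sigma_id m l (j : 'I_l.+2) (s : dmap m l.+1) :
  (forall i, dfun s i != j) -> dcomp (delta j) (dcomp (sigma j) s) = s.
Proof. by move=> s_miss; apply: dmap_ext => i; rewrite !dcompE deltaE lift_sigma. Qed.

Lemma sigma_max_delta n :
  dcomp (sigma (ord_max : 'I_n.+2)) (delta (inord n : 'I_n.+2)) = did n.
Proof.
apply: dmap_ext => i; apply: ord_inj; rewrite dcompE didE sigmaE deltaE /= /bump inordK //.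
by have := ltn_ord i; do ?case: ifP => ?; lia.
Qed.

Lemma dmap_sigma_factor N l (u : dmap l.+1 N) (b : 'I_l.+2) :
  0 < b -> dfun u (inord b.-1) = dfun u b -> u = dcomp (dcomp u (delta b)) (sigma b).
Proof.
move=> b_gt0 u_b; apply: dmap_ext => i; rewrite !dcompE deltaE.
have [->|/lift_sigma-> //] := eqVneq i b; rewrite -u_b; congr (dfun u _); apply: ord_inj.
by have lt_b := ltn_ord b; rewrite /= /bump sigmaE ltnn inordK; lia.
Qed.

Lemma dmap_repeat N l (u : dmap l N) : N < l ->
  exists2 b : 'I_l.+1, 0 < b & dfun u (inord b.-1) = dfun u b.
Proof.
move=> lt_Nl.
have [/existsP[b /andP[b_gt0 /eqP u_b]]|/existsPn u_inj] :=
  boolP [exists b : 'I_l.+1, (0 < b) && (dfun u (inord b.-1) == dfun u b)].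
  by exists b.
suff ge_u i : i <= l -> i <= dfun u (inord i).
  by have := ge_u l (leqnn l); have := ltn_ord (dfun u (inord l)); lia.
elim: i => // i IHi lt_il; have le_il : i < l.+1 by lia.
have := u_inj (inord i.+1); rewrite inordK //= -val_eqE /=.
have := @dmap_mono _ _ u (inord i) (inord i.+1); rewrite !inordK // => /(_ (leqnSn i)).
by have := IHi (ltnW lt_il); lia.
Qed.

Definition face_union N (A : 'I_N.+1 -> bool) m (s : dmap m N) : bool :=
  [exists j, A j && [forall i, dfun s i != j]].

Lemma face_union_comp N (A : 'I_N.+1 -> bool) l m (s : dmap m N) (t : dmap l m) :
  face_union A s -> face_union A (dcomp s t).
Proof.
case/existsP => j /andP[Aj /forallP s_miss]; apply/existsP; exists j.
by rewrite Aj; apply/forallP => i; rewrite dcompE.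
Qed.

Lemma face_union_delta n (A : 'I_n.+2 -> bool) l (j : 'I_n.+2) (u : dmap l n) :
  A j -> face_union A (dcomp (delta j) u).
Proof.
by move=> Aj; apply/existsP; exists j; rewrite Aj; apply/forallP => i; rewrite dcompE delta_neq.
Qed.

Lemma face_union_boundary N (A : 'I_N.+1 -> bool) m (s : dmap m N) :
  face_union A s -> boundary s.
Proof. by case/existsP => j /andP[_ s_miss]; apply/existsP; exists j. Qed.

Section FaceUnionMap.
Variables (C : Cat) (X : SObj C) (n : nat) (A : 'I_n.+2 -> bool).

Local Notation T := (@face_union n.+1 A).

(* Simplices of dimension [> n] of [T] are degenerate, so the simplices of
   dimension [<= n] form a finite category whose limit is [Map(T, X)]. *)
Definition simplex_ob : finType := {m : 'I_n.+1 & {s : dmap m n.+1 | T s}}.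

Definition simplex_hom (i j : simplex_ob) : finType :=
  {t : dmap (projT1 j) (projT1 i) | dcomp (sval (projT2 i)) t == sval (projT2 j)}.

Lemma simplex_comp_proof (i j k : simplex_ob) (v : simplex_hom j k) (u : simplex_hom i j) :
  dcomp (sval (projT2 i)) (dcomp (sval u) (sval v)) == sval (projT2 k).
Proof. by case: u v => [u u_ij] [v v_jk]; rewrite dcompA /= (eqP u_ij) (eqP v_jk). Qed.

Definition simplex_comp (i j k : simplex_ob) (v : simplex_hom j k) (u : simplex_hom i j) :
  simplex_hom i k := exist _ (dcomp (sval u) (sval v)) (simplex_comp_proof v u).

Lemma simplex_id_proof (i : simplex_ob) :
  dcomp (sval (projT2 i)) (did (projT1 i)) == sval (projT2 i).
Proof. by rewrite dcomp_did. Qed.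

Definition simplex_id (i : simplex_ob) : simplex_hom i i := exist _ (did _) (simplex_id_proof i).

Lemma simplex_compA i j k l (w : simplex_hom k l) (v : simplex_hom j k) (u : simplex_hom i j) :
  simplex_comp w (simplex_comp v u) = simplex_comp (simplex_comp w v) u.
Proof. by apply: val_inj; rewrite /= dcompA. Qed.

Lemma simplex_comp1l i j (u : simplex_hom i j) : simplex_comp (simplex_id j) u = u.
Proof. by apply: val_inj; rewrite /= dcomp_did. Qed.

Lemma simplex_comp1r i j (u : simplex_hom i j) : simplex_comp u (simplex_id i) = u.
Proof. by apply: val_inj; rewrite /= did_dcomp. Qed.

Definition simplex_cat : FinCat := Build_FinCat simplex_compA simplex_comp1l simplex_comp1r.

Definition simplex_dob (i : Jo simplex_cat) : C := X (projT1 i).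

Definition simplex_dhom (i j : Jo simplex_cat) (u : Jh i j) :
  Hom (simplex_dob i) (simplex_dob j) := sact X (sval u).

Lemma simplex_dhom_id i : simplex_dhom (jid i) = idm (simplex_dob i).
Proof. exact: sact_id. Qed.

Lemma simplex_dhom_comp i j k (v : Jh j k) (u : Jh i j) :
  simplex_dhom (jcomp v u) = comp (simplex_dhom v) (simplex_dhom u).
Proof. exact: sact_comp. Qed.

Definition simplex_diagram : Diagram C simplex_cat :=
  Build_Diagram simplex_dhom_id simplex_dhom_comp.

Lemma face_union_delta_id (j : 'I_n.+2) : A j -> T (delta j).
Proof. by move=> Aj; rewrite -[delta j]dcomp_did face_union_delta. Qed.

Definition face_ob (j : 'I_n.+2) (Aj : A j) : simplex_ob :=
  existT _ ord_max (exist (fun s : dmap n n.+1 => T s) (delta j) (face_union_delta_id Aj)).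

Definition missed_vertex m (s : dmap m n.+1) : 'I_n.+2 :=
  odflt ord0 [pick j | A j && [forall i, dfun s i != j]].

Lemma missed_vertexP m (s : dmap m n.+1) :
  T s -> A (missed_vertex s) /\ forall i, dfun s i != missed_vertex s.
Proof.
rewrite /missed_vertex; case: pickP => [j /andP[Aj /forallP]|no_j /existsP[j]] //=.
by rewrite no_j.
Qed.

Lemma delta_sigma_missed m (s : dmap m n.+1) (Ts : T s) :
  dcomp (delta (missed_vertex s)) (dcomp (sigma (missed_vertex s)) s) = s.
Proof. exact/delta_sigma_id/(missed_vertexP Ts).2. Qed.

Variables (L : C) (p : forall i : simplex_ob, Hom L (simplex_dob i)).
Hypothesis Lp_limit : is_limit simplex_diagram L p.

Definition limit_family (Z : C) (c : Hom Z L) : sfamily X T Z :=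
  fun m s Ts => comp (sact X (dcomp (sigma (missed_vertex s)) s))
                     (comp (p (face_ob (missed_vertexP Ts).1)) c).

Lemma cone_faces_agree l (u v : dmap l n) j j' (Aj : A j) (Aj' : A j') :
  dcomp (delta j) u = dcomp (delta j') v ->
  comp (sact X u) (p (face_ob Aj)) = comp (sact X v) (p (face_ob Aj')).
Proof.
elim/ltn_ind: l u v => l IHl u v uv.
have [lt_ln|le_nl] := ltnP l n.+1.
  pose w : simplex_ob := existT _ (Ordinal lt_ln)
    (exist (fun s : dmap l n.+1 => T s) _ (face_union_delta u Aj)).
  have u_w : dcomp (sval (projT2 (face_ob Aj))) u == sval (projT2 w) by [].
  have v_w : dcomp (sval (projT2 (face_ob Aj'))) v == sval (projT2 w) by rewrite /= uv.
  have := (proj1 Lp_limit) (face_ob Aj) w (exist _ u u_w).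
  have := (proj1 Lp_limit) (face_ob Aj') w (exist _ v v_w).
  by rewrite /= /simplex_dhom /= => -> ->.
case: l IHl u v uv le_nl => // l IHl u v uv le_nl.
have [b b_gt0 u_b] := dmap_repeat u le_nl.
have v_b : dfun v (inord b.-1) = dfun v b.
  have := f_equal (fun s => dfun s (inord b.-1)) uv; have := f_equal (fun s => dfun s b) uv.
  by rewrite !dcompE !deltaE u_b => -> /lift_inj.
rewrite (dmap_sigma_factor b_gt0 u_b) (dmap_sigma_factor b_gt0 v_b).
rewrite [sact X (dcomp (dcomp u _) _)]sact_comp [sact X (dcomp (dcomp v _) _)]sact_comp.
by rewrite -!comp_assoc; congr (comp _ _); apply: IHl; rewrite // !dcompA uv.
Qed.

Lemma sfamily_congr Z (a : sfamily X T Z) m (s s' : dmap m n.+1) (Ts : T s) (Ts' : T s') :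
  s = s' -> a m s Ts = a m s' Ts'.
Proof. by move=> eq_ss'; subst s'; rewrite (bool_irrelevance Ts Ts'). Qed.

Lemma limit_family_proj Z (c : Hom Z L) (i : simplex_ob) :
  comp (p i) c = limit_family c (valP (projT2 i)).
Proof.
rewrite /limit_family comp_assoc; congr (comp _ c).
set s := sval (projT2 i); set Ts := valP (projT2 i).
have face_s : dcomp (delta (missed_vertex s)) (dcomp (sigma (missed_vertex s)) s) == s.
  by rewrite delta_sigma_missed.
pose u : simplex_hom (face_ob (missed_vertexP Ts).1) i :=
  exist (fun t : dmap (projT1 i) n => dcomp (delta (missed_vertex s)) t == s) _ face_s.
by rewrite -((proj1 Lp_limit) _ _ u).
Qed.

Lemma limit_family_is_Map : is_Map X T L limit_family.
Proof.
have [cone univ] := Lp_limit; split.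
- move=> Z c l m t s Ts Tst; rewrite /limit_family [RHS]comp_assoc -sact_comp !comp_assoc.
  congr (comp _ c); apply: cone_faces_agree.
  by rewrite (delta_sigma_missed Tst) dcompA (delta_sigma_missed Ts).
- by move=> Z Z' g c m s Ts; rewrite /limit_family !comp_assoc.
- move=> Z a a_compat.
  pose q (i : simplex_ob) : Hom Z (simplex_dob i) := a _ _ (valP (projT2 i)).
  have q_cone i j (u : Jh i j) : comp (dhom simplex_diagram u) (q i) = q j.
    case: i j u => [m [s Ts]] [l [s' Ts']] [t st]; rewrite /q /= /simplex_dhom /=.
    change (dmap l m) in t; have st' : dcomp s t = s' := eqP st.
    by clear st; move: Ts'; rewrite -st' => Ts'; symmetry; apply: a_compat.
  have [h [h_q _]] := univ Z q q_cone.
  exists h => m s Ts; rewrite /limit_family h_q /q /=.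
  rewrite -(a_compat _ _ _ _ _ (face_union_comp _ (face_union_delta_id (missed_vertexP Ts).1))).
  exact/sfamily_congr/delta_sigma_missed.
- move=> Z c c' eq_cc'.
  pose q (i : simplex_ob) : Hom Z (simplex_dob i) := comp (p i) c.
  have q_cone i j (u : Jh i j) : comp (dhom simplex_diagram u) (q i) = q j.
    by rewrite /q comp_assoc cone.
  have [h [_ h_uniq]] := univ Z q q_cone.
  by rewrite (h_uniq c) // (h_uniq c') // => i; rewrite /q !limit_family_proj eq_cc'.
Qed.

End FaceUnionMap.

Lemma Map_face_union_exists (C : Cat) (X : SObj C) n (A : 'I_n.+2 -> bool) :
  has_finite_limits C -> exists M phi, is_Map X (face_union A) M phi.
Proof.
move=> finite_limits; have [L [p Lp_limit]] := finite_limits _ (simplex_diagram X A).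
by exists L, (limit_family p); apply: limit_family_is_Map.
Qed.

Lemma canon_Map_exists (C : Cat) (X : SObj C) N (T : forall m, dmap m N -> bool) M phi :
  is_Map X T M phi -> exists c : Hom (X N) M, canon_Map phi c.
Proof.
case=> _ _ Map_ex _.
by have [c] := Map_ex (X N) (fun m s _ => sact X s) (fun l m t s _ _ => sact_comp X s t); exists c.
Qed.

Section Cospan.
Variables (C : Cat) (A B C0 : C) (f : Hom A C0) (g : Hom B C0).

(* The cospan [0 -> 2 <- 1]. *)
Definition cospan_arrow (i j : nat) : bool := (i == j) || (j == 2).

Definition cospan_hom (i j : 'I_3) : finType := {x : unit | cospan_arrow i j}.

Lemma cospan_arrow_trans (i j k : nat) :
  cospan_arrow i j -> cospan_arrow j k -> cospan_arrow i k.
Proof.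
rewrite /cospan_arrow => /orP[/eqP-> // | /eqP->].
by rewrite eq_sym orbb => ->; rewrite orbT.
Qed.

Definition cospan_comp (i j k : 'I_3) (v : cospan_hom j k) (u : cospan_hom i j) :
  cospan_hom i k := exist _ tt (cospan_arrow_trans (valP u) (valP v)).

Definition cospan_id (i : 'I_3) : cospan_hom i i := exist _ tt (introT orP (or_introl (eqxx _))).

Lemma cospan_hom_eq (i j : 'I_3) (u v : cospan_hom i j) : u = v.
Proof. by apply: val_inj; case: (val u); case: (val v). Qed.

Definition cospan_cat : FinCat :=
  @Build_FinCat (ordinal 3) cospan_hom cospan_comp cospan_id
    (fun _ _ _ _ _ _ _ => cospan_hom_eq _ _) (fun _ _ _ => cospan_hom_eq _ _)
    (fun _ _ _ => cospan_hom_eq _ _).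

Definition cospan_dob (i : nat) : C := match i with 0 => A | 1 => B | _ => C0 end.

Definition cospan_map (i j : nat) : cospan_arrow i j -> Hom (cospan_dob i) (cospan_dob j) :=
  match i, j with
  | 0, 0 | 1, 1 => fun _ => idm _
  | 0, 2 => fun _ => f
  | 1, 2 => fun _ => g
  | _.+2, _.+2 => fun _ => idm C0
  | _, _ => fun H => False_rect _ (Bool.diff_false_true H)
  end.

Definition cospan_dhom (i j : Jo cospan_cat) (u : Jh i j) :
  Hom (cospan_dob i) (cospan_dob j) := cospan_map (valP u).

Lemma cospan_dhom_id i : cospan_dhom (jid i) = idm (cospan_dob i).
Proof. by case: i => [[|[|[|?]]] ?]. Qed.

Lemma cospan_dhom_comp i j k (v : Jh j k) (u : Jh i j) :
  cospan_dhom (jcomp v u) = comp (cospan_dhom v) (cospan_dhom u).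
Proof.
rewrite /cospan_dhom; move: (valP (jcomp v u)) (valP v) (valP u).
case: i j k {u v} => [[|[|[|?]]] ?] [[|[|[|?]]] ?] [[|[|[|?]]] ?] //= *.
all: by rewrite ?comp_idl ?comp_idr.
Qed.

Definition cospan_diagram : Diagram C cospan_cat := Build_Diagram cospan_dhom_id cospan_dhom_comp.

End Cospan.

Lemma pullback_exists (C : Cat) (A B C0 : C) (f : Hom A C0) (g : Hom B C0) :
  has_finite_limits C -> exists P (p1 : Hom P A) (p2 : Hom P B), is_pullback f g p1 p2.
Proof.
move=> finite_limits; have [L [p [cone univ]]] := finite_limits _ (cospan_diagram f g).
pose i0 : 'I_3 := Ordinal (isT : 0 < 3).
pose i1 : 'I_3 := Ordinal (isT : 1 < 3).
pose i2 : 'I_3 := Ordinal (isT : 2 < 3).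
have e02 : cospan_hom i0 i2 := exist _ tt isT.
have e12 : cospan_hom i1 i2 := exist _ tt isT.
exists L, (p i0), (p i1); split; first by rewrite (cone _ _ e02) (cone _ _ e12).
move=> Z q1 q2 q_sq.
pose q_nat (i : nat) : Hom Z (cospan_dob A B C0 i) :=
  match i with 0 => q1 | 1 => q2 | _ => comp f q1 end.
pose q (i : 'I_3) := q_nat i.
have q_cone i j (u : cospan_hom i j) : comp (cospan_dhom f g u) (q i) = q j.
  case: u => [[] ij]; rewrite /cospan_dhom /q /q_nat /=; move: ij.
  by case: i j => [[|[|[|?]]] ?] [[|[|[|?]]] ?] //= *; rewrite ?comp_idl.
have [h [h_q h_uniq]] := univ Z q q_cone.
exists h; split; first by split; [exact: (h_q i0) | exact: (h_q i1)].
move=> h' h'_q1 h'_q2; apply: h_uniq => -[[|[|[|?]]] i_lt] //.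
- by rewrite (_ : Ordinal i_lt = i0) //; apply: ord_inj.
- by rewrite (_ : Ordinal i_lt = i1) //; apply: ord_inj.
- by rewrite (_ : Ordinal i_lt = i2); [rewrite -(cone _ _ e02) -comp_assoc h'_q1 | apply: ord_inj].
Qed.

(* [Map(T -> Delta^N, f)] is the pullback of [Map(T, X) -> Map(T, Y) <- Y_N]. *)
Lemma MapRel_exists (C : Cat) (X Y : SObj C) (f : SMor X Y) N
    (T : forall m, dmap m N -> bool) MX phiX MY phiY :
  has_finite_limits C -> is_Map X T MX phiX -> is_Map Y T MY phiY ->
  exists M phi psi, is_MapRel f T M phi psi.
Proof.
move=> finite_limits [X_compat X_nat X_ex X_uniq] [Y_compat Y_nat Y_ex Y_uniq].
have [F F_phi] : exists F : Hom MX MY, forall m s H,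
    phiY MX F m s H = comp (f m) (phiX MX (idm MX) m s H).
  apply: Y_ex => l m t s Hs Hst.
  by rewrite (X_compat _ (idm MX) l m t s Hs Hst) comp_assoc (smor_nat f) -comp_assoc.
have phiY_F Z (d : Hom Z MX) m s H : phiY Z (comp F d) m s H = comp (f m) (phiX Z d m s H).
  by rewrite Y_nat F_phi -comp_assoc -X_nat comp_idl.
have [R R_canon] := canon_Map_exists (And4 Y_compat Y_nat Y_ex Y_uniq).
have phiY_R Z (y : Hom Z (Y N)) m s H : phiY Z (comp R y) m s H = comp (sact Y s) y.
  by rewrite Y_nat R_canon.
have [P [p1 [p2 [sq pb]]]] := pullback_exists F R finite_limits.
exists P, (fun Z c => phiX Z (comp p1 c)), (fun Z c => comp p2 c); split.
- by move=> Z c; apply: X_compat.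
- by move=> Z c m s H; rewrite -phiY_F -phiY_R !comp_assoc sq.
- by move=> Z Z' g c; split => [m s H|]; rewrite ?comp_assoc // -X_nat comp_assoc.
- move=> Z a y a_compat a_y.
  have [d d_a] := X_ex Z a a_compat.
  have Fd_Ry : comp F d = comp R y by apply: Y_uniq => m s H; rewrite phiY_F phiY_R d_a a_y.
  have [h [[p1h p2h] _]] := pb Z d y Fd_Ry.
  by exists h; split => // m s H; rewrite p1h d_a.
- move=> Z c c' phi_cc' p2_cc'.
  have p1_cc' : comp p1 c = comp p1 c' by apply: X_uniq.
  have sq_c : comp F (comp p1 c) = comp R (comp p2 c) by rewrite !comp_assoc sq.
  have [h [_ h_uniq]] := pb Z _ _ sq_c.
  by rewrite (h_uniq c) // (h_uniq c') // p1_cc'.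
Qed.

Lemma canon_MapRel_exists (C : Cat) (X Y : SObj C) (f : SMor X Y) N
    (T : forall m, dmap m N -> bool) M phi psi :
  is_MapRel f T M phi psi -> exists c : Hom (X N) M, canon_MapRel f phi psi c.
Proof.
case=> _ _ _ MapRel_ex _.
have [c [phi_c psi_c]] := MapRel_ex (X N) (fun m s _ => sact X s) (f N)
  (fun l m t s _ _ => sact_comp X s t) (fun m s _ => smor_nat f s).
by exists c.
Qed.

Lemma horn_boundary n (i : 'I_n.+1) m (s : dmap m n) : horn i s -> boundary s.
Proof. exact: (@face_union_boundary n (fun j => j != i)). Qed.

Lemma boundary_delta n (j : 'I_n.+2) : boundary (delta j).
Proof. by apply/existsP; exists j; apply/forallP => i; apply: delta_neq. Qed.

Lemma sigma_max_boundary n m (s : dmap m n.+1) (j : 'I_n.+2) :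
  (forall i, dfun s i != inord n) -> j != inord n -> (forall i, dfun s i != j) ->
  boundary (dcomp (sigma ord_max) s).
Proof.
move=> s_miss_n j_neq_n s_miss_j.
have {}s_miss_n i : dfun s i != n :> nat by move: (s_miss_n i); rewrite -val_eqE /= inordK.
have {}j_neq_n : j != n :> nat by move: j_neq_n; rewrite -val_eqE /= inordK.
have {}s_miss_j i : dfun s i != j :> nat by rewrite val_eqE.
have [eq_j|neq_j] := eqVneq (j : nat) n.+1.
  apply/existsP; exists ord_max; apply/forallP => i; rewrite dcompE -val_eqE /= sigmaE /=.
  have := s_miss_n i; have := s_miss_j i; have := ltn_ord (dfun s i).
  by rewrite eq_j; case: ifP => ?; lia.
apply/existsP; exists (inord j); apply/forallP => i.
rewrite dcompE -val_eqE /= sigmaE /= inordK; last by have := ltn_ord j; lia.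
have := s_miss_n i; have := s_miss_j i; have := ltn_ord (dfun s i); have := ltn_ord j.
by move: j_neq_n neq_j; case: ifP => ?; lia.
Qed.

Section SubcanonicalCovers.
Variables (V : DescentCat) (V_subcanonical : subcanonical V).

Lemma cover_epi (P Q : V) (c : Hom P Q) : cover c ->
  forall W (a1 a2 : Hom Q W), comp a1 c = comp a2 c -> a1 = a2.
Proof.
move=> c_cover W a1 a2 a12.
have [K [p1 [p2 pb]]] := pullback_exists c c (@dc_finite_limits V).
have a1c_p12 : comp (comp a1 c) p1 = comp (comp a1 c) p2 by rewrite -!comp_assoc pb.1.
have [u [_ u_uniq]] := @V_subcanonical _ _ _ c_cover _ _ _ pb _ _ a1c_p12.
by rewrite (u_uniq a1) // (u_uniq a2).
Qed.

(* The kernel pair of a monomorphism is the identity span. *)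
Lemma cover_mono_iso (P Q : V) (c : Hom P Q) : cover c ->
  (forall Z (g h : Hom Z P), comp c g = comp c h -> g = h) -> is_iso c.
Proof.
move=> c_cover c_mono.
have pb : is_pullback c c (idm P) (idm P).
  split=> [|Z q1 q2 /c_mono <-]; first by [].
  exists q1; split; first by rewrite comp_idl.
  by move=> h' <- _; rewrite comp_idl.
have [u [uc _]] := @V_subcanonical _ _ _ c_cover _ _ _ pb _ (idm P) erefl.
have [u0 [_ u0_uniq]] := @V_subcanonical _ _ _ c_cover _ _ _ pb _ c erefl.
exists u; split => //.
rewrite (u0_uniq (comp c u)); last by rewrite -comp_assoc uc comp_idr.
by rewrite (u0_uniq (idm Q)) // comp_idl.
Qed.

End SubcanonicalCovers.

Lemma kgroupoid_boundary_inj (V : DescentCat) k (X : SObj V) n :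
  is_kgroupoid k X -> k < n -> forall Z (g h : Hom Z (X n)),
  (forall m (s : dmap m n), boundary s -> comp (sact X s) g = comp (sact X s) h) ->
  g = h.
Proof.
case: n => // n X_kgpd lt_kn Z g h gh_bdry.
have [MH [phiH MH_Map]] := Map_face_union_exists X (fun j : 'I_n.+2 => j != ord0)
  (@dc_finite_limits V).
have [cH cH_canon] := canon_Map_exists MH_Map.
have [_ /(_ lt_kn) [cH_inv [cH_invK _]]] := X_kgpd n.+1 ord0 isT MH phiH MH_Map cH cH_canon.
suff cH_gh : comp cH g = comp cH h.
  by rewrite -[g]comp_idl -cH_invK -comp_assoc cH_gh comp_assoc cH_invK comp_idl.
case: MH_Map => _ MH_nat _ MH_uniq; apply: MH_uniq => m s Hs.
by rewrite !MH_nat !cH_canon gh_bdry //; apply: horn_boundary Hs.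
Qed.

Section HypercoverAtGroupoidLevel.
Variables (V : DescentCat) (V_subcanonical : subcanonical V) (X Y : SObj V) (f : SMor X Y).
Variables (n : nat) (X_ngpd : is_kgroupoid n X) (f_hypercover : is_hypercover f).

Local Notation i0 := (inord n : 'I_n.+2).

(* In [Map(boundary Delta^(n+1) -> Delta^(n+1), f)] the face [d_n] is
   determined by the horn [Lambda^(n+1)_n]: the comparison map from [X_(n+1)]
   is a cover, hence an epimorphism, and [X_(n+1)] is the horn space. *)
Lemma MapRel_horn_determines_face R phiR psiR :
  is_MapRel f (boundary (n:=n.+1)) R phiR psiR -> forall Z (pt1 pt2 : Hom Z R),
  (forall m s (Hs : horn i0 s),
     phiR Z pt1 m s (horn_boundary Hs) = phiR Z pt2 m s (horn_boundary Hs)) ->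
  phiR Z pt1 n (delta i0) (boundary_delta i0) = phiR Z pt2 n (delta i0) (boundary_delta i0).
Proof.
move=> R_MapRel Z pt1 pt2 pt12_horn.
have [R_compat _ R_nat _ _] := R_MapRel.
have phiR_comp Z' (pt : Hom Z' R) m s Hs :
    phiR Z' pt m s Hs = comp (phiR R (idm R) m s Hs) pt.
  by rewrite -(R_nat _ _ pt (idm R)).1 comp_idl.
have [MH [phiH MH_Map]] := Map_face_union_exists X (fun j : 'I_n.+2 => j != i0)
  (@dc_finite_limits V).
have [cH cH_canon] := canon_Map_exists MH_Map.
have [_ /(_ (ltnSn n)) [cH_inv [cH_invK _]]] := @X_ngpd n.+1 i0 isT MH phiH MH_Map cH cH_canon.
have [cR cR_canon] := canon_MapRel_exists R_MapRel.
have cR_cover : cover cR := f_hypercover R_MapRel cR_canon.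
case: MH_Map => _ MH_nat MH_ex MH_uniq.
have [r r_phi] : exists r : Hom R MH, forall m s Hs,
    phiH R r m s Hs = phiR R (idm R) m s (horn_boundary Hs).
  by apply: MH_ex => l m t s Hs Hst; apply: R_compat.
have r_cR : comp r cR = cH.
  apply: MH_uniq => m s Hs.
  by rewrite MH_nat r_phi -phiR_comp cR_canon.1 cH_canon.
have face_R : phiR R (idm R) n (delta i0) (boundary_delta i0) =
              comp (sact X (delta i0)) (comp cH_inv r).
  apply: (cover_epi V_subcanonical cR_cover).
  by rewrite -phiR_comp cR_canon.1 -!comp_assoc r_cR cH_invK comp_idr.
suff r_pt12 : comp r pt1 = comp r pt2.
  by rewrite (phiR_comp _ pt1) (phiR_comp _ pt2) face_R -!comp_assoc r_pt12.
by apply: MH_uniq => m s Hs; rewrite !MH_nat r_phi -!phiR_comp.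
Qed.

Lemma hypercover_boundary_inj Z (g h : Hom Z (X n)) :
  (forall m (s : dmap m n), boundary s -> comp (sact X s) g = comp (sact X s) h) ->
  comp (f n) g = comp (f n) h -> g = h.
Proof.
move=> gh_bdry fgh; have finite_limits := @dc_finite_limits V.
have [MX [phiX MX_Map]] := Map_face_union_exists X (fun _ : 'I_n.+2 => true) finite_limits.
have [MY [phiY MY_Map]] := Map_face_union_exists Y (fun _ : 'I_n.+2 => true) finite_limits.
have [R [phiR [psiR R_MapRel]]] := MapRel_exists f finite_limits MX_Map MY_Map.
have [cR [cR_phi _]] := canon_MapRel_exists R_MapRel.
have [_ _ R_nat R_ex _] := R_MapRel.
pose sg : dmap n.+1 n := sigma ord_max.
(* the degenerate simplex [s_n g], with its face [d_n] replaced by [h] *)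
pose a : sfamily X (boundary (n:=n.+1)) Z := fun m s _ =>
  comp (sact X (dcomp sg s)) (if [forall i, dfun s i != i0] then h else g).
have a_horn m s Hs : horn i0 s -> a m s Hs = comp (sact X (dcomp sg s)) g.
  rewrite /a; case: ifP => // /forallP s_miss_i0 /existsP[j /andP[j_neq /forallP s_miss_j]].
  by symmetry; apply/gh_bdry/(sigma_max_boundary s_miss_i0 j_neq s_miss_j).
have a_compat : scompatible a.
  move=> l m t s Hs Hst; have [s_miss_i0|s_hit_i0] := boolP [forall i, dfun s i != i0].
    have st_miss_i0 : [forall i, dfun (dcomp s t) i != i0].
      by apply/forallP => i; rewrite dcompE (forallP s_miss_i0).
    by rewrite /a s_miss_i0 st_miss_i0 comp_assoc -sact_comp dcompA.
  have s_horn : horn i0 s.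
    case/existsP: Hs => j s_miss_j; apply/existsP; exists j; rewrite s_miss_j andbT.
    by apply: contraNneq s_hit_i0 => <-.
  rewrite (a_horn _ _ _ s_horn) a_horn; last exact: face_union_comp.
  by rewrite comp_assoc -sact_comp dcompA.
pose y := comp (sact Y sg) (comp (f n) g).
have a_y m s Hs : comp (f m) (a m s Hs) = comp (sact Y s) y.
  rewrite /a /y [RHS]comp_assoc -sact_comp comp_assoc (smor_nat f) -comp_assoc.
  by case: ifP; rewrite ?fgh.
have [pt1 [pt1_phi _]] := R_ex Z a y a_compat a_y.
pose pt2 := comp cR (comp (sact X sg) g).
have pt2_phi m s Hs : phiR Z pt2 m s Hs = comp (sact X (dcomp sg s)) g.
  by rewrite (R_nat _ _ _ cR).1 cR_phi comp_assoc -sact_comp.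
have := MapRel_horn_determines_face (pt1 := pt1) (pt2 := pt2) R_MapRel.
rewrite pt1_phi pt2_phi /a sigma_max_delta sact_id !comp_idl.
suff -> : [forall i, dfun (delta i0) i != i0].
  by move=> hg; apply/esym/hg => m s Hs; rewrite pt1_phi pt2_phi a_horn.
by apply/forallP => i; apply: delta_neq.
Qed.

End HypercoverAtGroupoidLevel.

Theorem lemma3p13 (V : DescentCat) (Hsub : subcanonical V) (k : nat)
  (X Y : SObj V) (f : SMor X Y) :
  is_kgroupoid k X -> is_kgroupoid k Y -> is_hypercover f ->
  forall n, k <= n ->
  forall (M : V) (phi : forall Z : V, Hom Z M -> sfamily X (boundary (n:=n)) Z)
    (psi : forall Z : V, Hom Z M -> Hom Z (Y n)),
    is_MapRel f (boundary (n:=n)) M phi psi ->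
    forall c : Hom (X n) M, canon_MapRel f phi psi c -> is_iso c.
Proof.
move=> X_kgpd _ f_hypercover n le_kn M phi psi M_MapRel c c_canon.
apply: (cover_mono_iso Hsub (f_hypercover n M phi psi M_MapRel c c_canon)).
move=> Z g h cg_ch; have [_ _ M_nat _ _] := M_MapRel.
have gh_bdry m (s : dmap m n) : boundary s -> comp (sact X s) g = comp (sact X s) h.
  by move=> Hs; rewrite -!(c_canon.1 m s Hs) -!((M_nat _ _ _ c).1 m s Hs) cg_ch.
have fgh : comp (f n) g = comp (f n) h by rewrite -c_canon.2 -!(M_nat _ _ _ c).2 cg_ch.
have [lt_kn|ge_kn] := ltnP k n; first exact: (kgroupoid_boundary_inj X_kgpd lt_kn gh_bdry).
have eq_kn : k = n by apply/eqP; rewrite eqn_leq le_kn ge_kn.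
by subst k; apply: (hypercover_boundary_inj Hsub X_kgpd f_hypercover gh_bdry fgh).
Qed.
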